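(* Let $a>0$ and $0<h<\frac{\pi}{2a}$. For each integer $m\ge2$, let $\alpha_m$ be the $m$-th positive solution $q$ (in increasing order) of $\tan(hq)=\frac{2aq}{q^2-a^2}$. Then $\alpha_m\in\left[\frac{(m-1)\pi}{h},\frac{(m-1)\pi}{h}+\frac{\pi}{2h}\right]$ for all $m\ge2$. *)

From Stdlib Require Export Reals Lra List.
Open Scope R_scope.

(* q is a positive solution of tan(h q) = 2 a q / (q^2 - a^2):
   both sides must be defined, i.e. cos(h q) <> 0 and q^2 <> a^2. *)
Definition is_pos_sol (a h q : R) : Prop :=
  0 < q /\ cos (h * q) <> 0 /\ q ^ 2 - a ^ 2 <> 0 /\
  tan (h * q) = 2 * a * q / (q ^ 2 - a ^ 2).

(* alpha is the m-th positive solution in increasing order (m >= 1):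
   it is a solution and exactly m-1 solutions are strictly smaller. *)
Definition is_mth_pos_sol (a h : R) (m : nat) (alpha : R) : Prop :=
  is_pos_sol a h alpha /\
  exists l : list R, NoDup l /\ length l = (m - 1)%nat /\
    forall q, In q l <-> (is_pos_sol a h q /\ q < alpha).

(* Put t := h q - k pi for the integer k with k pi <= h q < (k+1) pi; since tan has period pi
   the equation reads tan t = 2 a q / (q^2 - a^2).  For t in (pi/2, pi) we have h q > pi/2 > a h,
   so the right-hand side is positive while tan t < 0; hence every solution lies in a branch
   k pi < h q < k pi + pi/2.  On a branch tan t increases while 2 a q / (q^2 - a^2) decreases
   (the solutions have q > a), so there is at most one solution, and the intermediate value
   theorem gives one.  The m-th solution is therefore the one on branch m - 1. *)
From Stdlib Require Import Reals List Permutation.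
From Stdlib Require Import Lra Lia ZArith.
Open Scope R_scope.

Lemma sin_cos_plus_nat_PI k t :
  sin (t + INR k * PI) = (-1) ^ k * sin t /\ cos (t + INR k * PI) = (-1) ^ k * cos t.
Proof.
  induction k as [|k [IHs IHc]].
  - simpl; rewrite Rmult_0_l, Rplus_0_r; split; ring.
  - rewrite S_INR.
    replace (t + (INR k + 1) * PI) with (t + INR k * PI + PI) by ring.
    rewrite neg_sin, neg_cos, IHs, IHc; simpl; split; ring.
Qed.

(* Holds even where cos t = 0, since then both sides are the junk value x / 0 = 0. *)
Lemma tan_plus_nat_PI k t : tan (t + INR k * PI) = tan t.
Proof.
  destruct (sin_cos_plus_nat_PI k t) as [Hs Hc].
  assert (He : (-1) ^ k <> 0) by (apply pow_nonzero; lra).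
  unfold tan, Rdiv; rewrite Hs, Hc, Rinv_mult.
  replace ((-1) ^ k * sin t * (/ (-1) ^ k * / cos t))
    with ((-1) ^ k * / (-1) ^ k * (sin t * / cos t)) by ring.
  rewrite Rinv_r by exact He; ring.
Qed.

Lemma cos_plus_nat_PI_neq0 k t : cos t <> 0 -> cos (t + INR k * PI) <> 0.
Proof.
  intros Hc. destruct (sin_cos_plus_nat_PI k t) as [_ ->].
  apply Rmult_integral_contrapositive; split; [apply pow_nonzero; lra | exact Hc].
Qed.

Lemma nat_PI_floor x : 0 <= x -> exists k : nat, INR k * PI <= x < INR k * PI + PI.
Proof.
  intros Hx. pose proof PI_RGT_0 as HPI.
  destruct (base_Int_part (x / PI)) as [Hlo Hhi].
  assert (Hz : (0 <= Int_part (x / PI))%Z).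
  { cut (-1 < Int_part (x / PI))%Z; [lia |]. apply lt_IZR.
    assert (0 <= x / PI) by (apply Rmult_le_pos; [lra | apply Rlt_le, Rinv_0_lt_compat; lra]).
    lra. }
  exists (Z.to_nat (Int_part (x / PI))).
  rewrite INR_IZR_INZ, Z2Nat.id by exact Hz.
  assert (Hx' : x = x / PI * PI) by (field; lra).
  split; nra.
Qed.

Lemma INR_lt_succ_le i j : (i < j)%nat -> INR i + 1 <= INR j.
Proof. intros Hij. rewrite <- S_INR. apply le_INR. lia. Qed.

Lemma ratio_decreasing a x y :
  0 < a -> a < x -> x < y -> 2 * a * y / (y ^ 2 - a ^ 2) < 2 * a * x / (x ^ 2 - a ^ 2).
Proof.
  intros Ha Hax Hxy.
  assert (Hx2 : x ^ 2 - a ^ 2 > 0) by nra.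
  assert (Hy2 : y ^ 2 - a ^ 2 > 0) by nra.
  apply Rlt_0_minus.
  replace (2 * a * x / (x ^ 2 - a ^ 2) - 2 * a * y / (y ^ 2 - a ^ 2))
    with (2 * a * ((y - x) * (x * y + a ^ 2)) / ((x ^ 2 - a ^ 2) * (y ^ 2 - a ^ 2)))
    by (field; lra).
  apply Rdiv_lt_0_compat; [| nra].
  apply Rmult_lt_0_compat; [lra |]. apply Rmult_lt_0_compat; nra.
Qed.

Definition in_branch (h : R) (k : nat) (q : R) : Prop :=
  INR k * PI < h * q < INR k * PI + PI / 2.

Lemma in_branch_below_iff h k j q :
  in_branch h k q -> (h * q < INR j * PI <-> (k < j)%nat).
Proof.
  intros [Hlo Hhi]. pose proof PI_RGT_0 as HPI. split.
  - intros Hq. destruct (Nat.lt_ge_cases k j) as [Hkj | Hjk]; [exact Hkj |].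
    apply le_INR in Hjk. nra.
  - intros Hkj. apply INR_lt_succ_le in Hkj. nra.
Qed.

Lemma in_branch_bounds h k q :
  0 < h -> in_branch h k q ->
  INR k * PI / h <= q <= INR k * PI / h + PI / (2 * h).
Proof.
  intros Hh [Hlo Hhi].
  assert (Hq : q = h * q / h) by (field; lra).
  split; apply Rlt_le; rewrite Hq.
  - apply Rmult_lt_compat_r; [apply Rinv_0_lt_compat |]; lra.
  - replace (INR k * PI / h + PI / (2 * h)) with ((INR k * PI + PI / 2) / h) by (field; lra).
    apply Rmult_lt_compat_r; [apply Rinv_0_lt_compat |]; lra.
Qed.

Section Branches.

Variables a h : R.
Hypothesis ha : 0 < a.
Hypothesis hh : 0 < h.
Hypothesis hah : a * h < PI / 2.

Lemma pos_sol_shift k q :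
  is_pos_sol a h q ->
  cos (h * q - INR k * PI) <> 0 /\ tan (h * q - INR k * PI) = 2 * a * q / (q ^ 2 - a ^ 2).
Proof.
  intros (_ & Hc & _ & Ht).
  set (t := h * q - INR k * PI).
  assert (Hq : h * q = t + INR k * PI) by (unfold t; ring).
  rewrite Hq, tan_plus_nat_PI in Ht. split; [| exact Ht].
  intros Hc0. apply Hc. rewrite Hq. destruct (sin_cos_plus_nat_PI k t) as [_ ->].
  rewrite Hc0; ring.
Qed.

Lemma pos_sol_in_branch q : is_pos_sol a h q -> exists k, in_branch h k q.
Proof.
  intros Hsol. pose proof PI_RGT_0 as HPI.
  assert (Hq : 0 < q) by apply Hsol.
  assert (Hq2 : q ^ 2 - a ^ 2 <> 0) by apply Hsol.
  destruct (nat_PI_floor (h * q)) as [k [Hlo Hhi]]; [nra |].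
  exists k. destruct (pos_sol_shift k q Hsol) as [Hc Ht].
  set (t := h * q - INR k * PI) in *.
  assert (Hk : 0 <= INR k * PI) by (apply Rmult_le_pos; [apply pos_INR | lra]).
  destruct (Rtotal_order t (PI / 2)) as [Ht2 | [Ht2 | Ht2]].
  - destruct (Req_dec t 0) as [Ht0 | Ht0]; [| unfold in_branch, t in *; lra].
    rewrite Ht0, tan_0 in Ht. symmetry in Ht.
    apply Rmult_integral in Ht as [Ht | Ht]; [nra |].
    apply Rinv_neq_0_compat in Hq2. contradiction.
  - rewrite Ht2, cos_PI2 in Hc. contradiction.
  - exfalso.
    assert (Hneg : tan t < 0).
    { unfold tan. apply Rdiv_pos_neg;
        [apply sin_gt_0 | apply cos_lt_0]; unfold t in *; lra. }
    assert (Hqa : a < q) by (unfold t in Ht2; nra).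
    assert (0 < 2 * a * q / (q ^ 2 - a ^ 2)) by (apply Rdiv_lt_0_compat; nra).
    lra.
Qed.

Lemma pos_sol_branch_spec k q :
  is_pos_sol a h q -> in_branch h k q ->
  a < q /\ tan (h * q - INR k * PI) = 2 * a * q / (q ^ 2 - a ^ 2).
Proof.
  intros Hsol [Hlo Hhi]. assert (Hq : 0 < q) by apply Hsol.
  destruct (pos_sol_shift k q Hsol) as [_ Ht]. split; [| exact Ht].
  assert (Hpos : 0 < tan (h * q - INR k * PI)) by (apply tan_gt_0; lra).
  rewrite Ht in Hpos.
  destruct (Rlt_or_le 0 (q ^ 2 - a ^ 2)) as [Hq2 | Hq2]; [nra |].
  assert (Hq2' : q ^ 2 - a ^ 2 < 0).
  { destruct Hq2 as [Hq2 | Hq2]; [exact Hq2 |]. exfalso; apply Hsol; exact Hq2. }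
  assert (2 * a * q / (q ^ 2 - a ^ 2) < 0) by (apply Rdiv_pos_neg; nra).
  lra.
Qed.

Lemma pos_sol_branch_unique k q1 q2 :
  is_pos_sol a h q1 -> is_pos_sol a h q2 -> in_branch h k q1 -> in_branch h k q2 -> q1 = q2.
Proof.
  intros Hsol1 Hsol2 Hb1 Hb2.
  assert (Hmono : forall x y, is_pos_sol a h x -> is_pos_sol a h y ->
                  in_branch h k x -> in_branch h k y -> ~ x < y).
  { intros x y Hx Hy Hbx Hby Hxy.
    destruct (pos_sol_branch_spec k x Hx Hbx) as [Hax Htx].
    destruct (pos_sol_branch_spec k y Hy Hby) as [Hay Hty].
    pose proof (ratio_decreasing a x y ha Hax Hxy) as Hdec.
    destruct Hbx as [Hx1 _]; destruct Hby as [_ Hy2].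
    assert (Htan : tan (h * x - INR k * PI) < tan (h * y - INR k * PI))
      by (apply tan_increasing; nra).
    lra. }
  destruct (Rtotal_order q1 q2) as [H12 | [H12 | H12]]; [| exact H12 |]; exfalso.
  - exact (Hmono q1 q2 Hsol1 Hsol2 Hb1 Hb2 H12).
  - exact (Hmono q2 q1 Hsol2 Hsol1 Hb2 Hb1 H12).
Qed.

(* The equation with denominators cleared: continuous, unlike tan, so the IVT applies. *)
Definition branch_residual (k : nat) (q : R) : R :=
  sin (h * q - INR k * PI) * (q ^ 2 - a ^ 2) - 2 * a * q * cos (h * q - INR k * PI).

Lemma branch_residual_continuous k : continuity (branch_residual k).
Proof. unfold branch_residual. reg. Qed.

Lemma branch_residual_root_pos_sol k q :
  in_branch h k q -> branch_residual k q = 0 -> is_pos_sol a h q.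
Proof.
  intros Hb Hroot. pose proof PI_RGT_0 as HPI.
  assert (Hk : 0 <= INR k * PI) by (apply Rmult_le_pos; [apply pos_INR | lra]).
  destruct Hb as [Hlo Hhi].
  set (t := h * q - INR k * PI) in *.
  assert (Hs : 0 < sin t) by (apply sin_gt_0; unfold t; lra).
  assert (Hc : 0 < cos t) by (apply cos_gt_0; unfold t; lra).
  assert (Hq : 0 < q) by nra.
  assert (Heq : sin t * (q ^ 2 - a ^ 2) = 2 * a * q * cos t)
    by (unfold branch_residual in Hroot; fold t in Hroot; lra).
  assert (Hq2 : q ^ 2 - a ^ 2 <> 0).
  { intros Hq2. rewrite Hq2, Rmult_0_r in Heq.
    assert (0 < 2 * a * q * cos t) by (repeat apply Rmult_lt_0_compat; lra). lra. }
  assert (Hhq : h * q = t + INR k * PI) by (unfold t; ring).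
  split; [exact Hq | split; [| split; [exact Hq2 |]]]; rewrite Hhq.
  - apply cos_plus_nat_PI_neq0; lra.
  - rewrite tan_plus_nat_PI. unfold tan. field_simplify_eq; [lra | split; [exact Hq2 | lra]].
Qed.

Lemma branch_residual_neg_left k :
  exists L, INR k * PI <= h * L < INR k * PI + PI / 2 /\ branch_residual k L < 0.
Proof.
  pose proof PI_RGT_0 as HPI. unfold branch_residual.
  destruct k as [| k].
  - exists a. simpl INR. rewrite Rmult_0_l, Rminus_0_r, Rplus_0_l.
    assert (Hc : 0 < cos (h * a)) by (apply cos_gt_0; nra).
    assert (0 < 2 * a * a * cos (h * a)) by (repeat apply Rmult_lt_0_compat; lra).
    split; [split |]; nra.
  - assert (Hk : 0 < INR (S k)) by (apply lt_0_INR; lia).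
    exists (INR (S k) * PI / h).
    replace (h * (INR (S k) * PI / h)) with (INR (S k) * PI) by (field; lra).
    rewrite Rminus_diag, sin_0, cos_0.
    assert (0 < INR (S k) * PI / h) by (apply Rdiv_lt_0_compat; nra).
    split; [split |]; nra.
Qed.

Lemma branch_residual_pos_right k :
  0 < branch_residual k ((INR k * PI + PI / 2) / h).
Proof.
  pose proof PI_RGT_0 as HPI. unfold branch_residual.
  assert (Hk : 0 <= INR k * PI) by (apply Rmult_le_pos; [apply pos_INR | lra]).
  set (R := (INR k * PI + PI / 2) / h).
  assert (HR : h * R = INR k * PI + PI / 2) by (unfold R; field; lra).
  replace (h * R - INR k * PI) with (PI / 2) by lra.
  rewrite sin_PI2, cos_PI2.
  assert (a < R) by nra.
  nra.
Qed.

Lemma pos_sol_branch_exists k : exists q, is_pos_sol a h q /\ in_branch h k q.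
Proof.
  pose proof PI_RGT_0 as HPI.
  destruct (branch_residual_neg_left k) as [L [[HL1 HL2] Hneg]].
  set (R := (INR k * PI + PI / 2) / h).
  pose proof (branch_residual_pos_right k) as Hpos; fold R in Hpos.
  assert (HR : h * R = INR k * PI + PI / 2) by (unfold R; field; lra).
  assert (HLR : L < R) by nra.
  destruct (IVT (branch_residual k) L R (branch_residual_continuous k) HLR Hneg Hpos)
    as [q [[HLq HqR] Hroot]].
  assert (Hb : in_branch h k q).
  { assert (HLq' : L < q) by (destruct HLq as [? | <-]; lra).
    assert (HqR' : q < R) by (destruct HqR as [? | ->]; lra).
    split; nra. }
  exists q. split; [exact (branch_residual_root_pos_sol k q Hb Hroot) | exact Hb].
Qed.

Lemma pos_sols_below_branch k :
  exists l, NoDup l /\ length l = k /\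
    forall q, In q l <-> is_pos_sol a h q /\ h * q < INR k * PI.
Proof.
  induction k as [| k [l [Hnd [Hlen Hmem]]]].
  - exists nil. split; [constructor | split; [reflexivity |]].
    intros q. simpl. split; [tauto |]. intros [Hsol Hq].
    assert (0 < q) by apply Hsol. nra.
  - destruct (pos_sol_branch_exists k) as [s [Hs Hbs]].
    exists (s :: l). split; [| split; [simpl; lia |]].
    + constructor; [| exact Hnd]. intros Hin.
      apply Hmem, proj2, (in_branch_below_iff h k k s Hbs) in Hin. lia.
    + intros q. cbn [In]. rewrite Hmem. split.
      * intros [<- | [Hq Hlt]]; split; try assumption.
        -- apply (in_branch_below_iff h k (S k) s Hbs). lia.
        -- rewrite S_INR. pose proof PI_RGT_0. lra.
      * intros [Hq Hlt]. destruct (pos_sol_in_branch q Hq) as [i Hbi].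
        apply (in_branch_below_iff h i (S k) q Hbi) in Hlt.
        destruct (Nat.lt_ge_cases i k) as [Hik | Hik].
        -- right. split; [exact Hq |]. apply (in_branch_below_iff h i k q Hbi). exact Hik.
        -- left. apply (pos_sol_branch_unique k); [exact Hs | exact Hq | exact Hbs |].
           replace k with i by lia. exact Hbi.
Qed.

Lemma pos_sol_lt_iff_below_branch alpha k :
  is_pos_sol a h alpha -> in_branch h k alpha ->
  forall q, is_pos_sol a h q /\ q < alpha <-> is_pos_sol a h q /\ h * q < INR k * PI.
Proof.
  intros Hsa Hba q. split; intros [Hq Hlt]; split; try exact Hq.
  - destruct (pos_sol_in_branch q Hq) as [i Hbi].
    apply (in_branch_below_iff h i k q Hbi).
    destruct (Nat.lt_trichotomy i k) as [Hik | [-> | Hki]]; [exact Hik | |]; exfalso.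
    + pose proof (pos_sol_branch_unique k q alpha Hq Hsa Hbi Hba). lra.
    + apply (in_branch_below_iff h k i alpha Hba) in Hki.
      destruct Hbi as [Hbi _]. nra.
  - destruct Hba as [Hba _]. nra.
Qed.

End Branches.

Theorem lemma3p2 (a h : R) (ha : 0 < a) (hh0 : 0 < h) (hh1 : h < PI / (2 * a)) :
  forall m : nat, (2 <= m)%nat ->
    (exists alpha, is_mth_pos_sol a h m alpha) /\
    (forall alpha, is_mth_pos_sol a h m alpha ->
       INR (m - 1) * PI / h <= alpha <= INR (m - 1) * PI / h + PI / (2 * h)).
Proof.
  intros m _.
  assert (hah : a * h < PI / 2).
  { apply (Rmult_lt_compat_l (2 * a)) in hh1; [| lra].
    replace (2 * a * (PI / (2 * a))) with PI in hh1 by (field; lra). lra. }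
  split.
  - destruct (pos_sol_branch_exists a h ha hh0 hah (m - 1)) as [alpha [Hsol Hb]].
    destruct (pos_sols_below_branch a h ha hh0 hah (m - 1)) as [l [Hnd [Hlen Hmem]]].
    exists alpha. split; [exact Hsol |]. exists l. split; [exact Hnd | split; [exact Hlen |]].
    intros q. rewrite Hmem. symmetry.
    exact (pos_sol_lt_iff_below_branch a h ha hh0 hah alpha (m - 1) Hsol Hb q).
  - intros alpha [Hsol [l [Hnd [Hlen Hmem]]]].
    destruct (pos_sol_in_branch a h ha hh0 hah alpha Hsol) as [k Hb].
    destruct (pos_sols_below_branch a h ha hh0 hah k) as [l' [Hnd' [Hlen' Hmem']]].
    assert (Hperm : Permutation l l').
    { apply NoDup_Permutation; [exact Hnd | exact Hnd' |]. intros q.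
      rewrite Hmem, Hmem'. exact (pos_sol_lt_iff_below_branch a h ha hh0 hah alpha k Hsol Hb q). }
    apply Permutation_length in Hperm. rewrite Hlen, Hlen' in Hperm. rewrite <- Hperm in Hb.
    exact (in_branch_bounds h (m - 1) alpha hh0 Hb).
Qed.
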